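(* Let $V:\mathbb{C}^7\to\mathbb{C}^3\otimes\mathbb{C}^3$ be any isometry whose range is the orthogonal complement of $\operatorname{span}\{\ket{\phi_3^+},\ket{0}\otimes\ket{1}\}$, where $\ket{\phi_3^+}=\frac1{\sqrt3}\sum_{k=0}^2\ket{k}\otimes\ket{k}$, and let $\mathcal{N}_7^V:\mathcal{L}(\mathbb{C}^7)\to\mathcal{L}(\mathbb{C}^3)$ be $\mathcal{N}_7^V(\rho)=\operatorname{Tr}_E(V\rho V^\dagger)$ (trace over the second tensor factor). Then for every $p\in[0,1]$, $M_7(p)\in\mathcal{P}^{7\to7}_{\min}(\mathcal{N}_7^V,V)$, and for every $p\in(0,1]$ and every $\tilde d\le 6$, $M_7(p)\notin\mathcal{P}^{7\to7}(\mathcal{Q}_{\tilde d})$. Consequently $\mathcal{P}^{7\to 7}_{\min}(\mathcal{N}_7^V,V)\not\subseteq\mathcal{P}^{7\to7}(\mathcal{Q}_{\tilde d})$ for all $\tilde d<7$, i.e. minimal environment assistance optimally unlocks the encoding strength of $\mathcal{N}_7^V$.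
   Context: $M_7(p)=\mathbb{I}_5\oplus\begin{pmatrix}p&1-p\\ p/3&1-p/3\end{pmatrix}$ (a $7\times7$ block-diagonal row-stochastic matrix). $\mathcal{P}^{n\to m}(\mathcal{Q}_d)$ is the set of $n\times m$ matrices $P_{ij}=\operatorname{Tr}[\Lambda_j\rho_i]$ with $\rho_i$ density matrices on $\mathbb{C}^d$ and $\{\Lambda_j\}_{j=1}^m$ a POVM on $\mathbb{C}^d$. For a channel $\mathcal{N}$ with isometry $V:\mathbb{C}^{d_A}\to\mathbb{C}^{d_B}\otimes\mathbb{C}^{d_E}$ (first factor receiver $B$, second environment $E$), $\mathcal{N}(\rho)=\operatorname{Tr}_E(V\rho V^\dagger)$, the set $\mathcal{P}^{n\to m}_{\min}(\mathcal{N},V)$ (minimal environment assistance) consists of the $n\times m$ matrices $P_{ij}=\sum_{l,k}q(j\mid l,k)\operatorname{Tr}[(\Lambda^B_l\otimes\Lambda^E_k)V\rho_iV^\dagger]$, where $\rho_i$ are density matrices on $\mathbb{C}^{d_A}$, $\{\Lambda^B_l\}$ and $\{\Lambda^E_k\}$ are finite-outcome POVMs on $\mathbb{C}^{d_B}$ and $\mathbb{C}^{d_E}$, and $q(\cdot\mid l,k)$ is a probability distribution on $\{1,\dots,m\}$ for each $(l,k)$. *)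

From HB Require Import structures.
From mathcomp Require Import all_boot all_order all_algebra.
From mathcomp Require Import reals complex mxtens.
Set Implicit Arguments. Unset Strict Implicit. Unset Printing Implicit Defensive.
Import Order.TTheory GRing.Theory Num.Theory.
Local Open Scope ring_scope.

Section QDefs.
Variable R : realType.
Local Notation C := R[i].

Definition toC (x : R) : C := Complex x 0.

Definition adj m n (A : 'M[C]_(m, n)) : 'M[C]_(n, m) :=
  \matrix_(i, j) (A j i)^*.

Definition psd n (A : 'M[C]_n) : Prop :=
  A = adj A /\ forall v : 'cV[C]_n, 0 <= (adj v *m A *m v) 0 0.

Definition density n (rho : 'M[C]_n) : Prop := psd rho /\ \tr rho = 1.

Definition povm d k (L : 'I_k -> 'M[C]_d) : Prop :=
  (forall j, psd (L j)) /\ \sum_(j < k) L j = 1%:M.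

(* isometry V : C^dA -> C^dB (x) C^dE, first tensor factor = receiver B *)
Definition is_isometry dA dB dE (V : 'M[C]_(dB * dE, dA)) : Prop :=
  adj V *m V = 1%:M.

Definition PQ d n m (P : 'M[R]_(n, m)) : Prop :=
  exists (rho : 'I_n -> 'M[C]_d) (L : 'I_m -> 'M[C]_d),
    (forall i, density (rho i)) /\ povm L /\
    forall i j, toC (P i j) = \tr (L j *m rho i).

(* P^{n->m}_min(N, V) for the channel N(rho) = Tr_E (V rho V^dagger),
   which depends only on the isometry V. *)
Definition Pmin dA dB dE (V : 'M[C]_(dB * dE, dA)) n m (P : 'M[R]_(n, m)) : Prop :=
  exists (rho : 'I_n -> 'M[C]_dA) (kB kE : nat)
         (LB : 'I_kB -> 'M[C]_dB) (LE : 'I_kE -> 'M[C]_dE)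
         (q : 'I_kB -> 'I_kE -> 'I_m -> R),
    (forall i, density (rho i)) /\ povm LB /\ povm LE /\
    (forall l k j, 0 <= q l k j) /\
    (forall l k, \sum_(j < m) q l k j = 1) /\
    forall i j, toC (P i j) =
      \sum_(l < kB) \sum_(k < kE)
        toC (q l k j) * \tr ((LB l *t LE k) *m (V *m rho i *m adj V)).

Definition ket3 (k : 'I_3) : 'cV[C]_3 := delta_mx k 0.

Definition phi3 : 'M[C]_(3 * 3, 1 * 1) :=
  (sqrtC 3)^-1 *: \sum_(k < 3) (ket3 k *t ket3 k).

Definition ket01 : 'M[C]_(3 * 3, 1 * 1) := ket3 0 *t ket3 1.

Definition range_is_perp (V : 'M[C]_(3 * 3, 7)) : Prop :=
  forall x : 'cV[C]_(3 * 3),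
    (exists y : 'cV[C]_7, x = V *m y) <->
    (adj phi3 *m x = 0 /\ adj ket01 *m x = 0).

Definition M7 (p : R) : 'M[R]_7 :=
  block_mx (1%:M : 'M[R]_5) 0 0
    (\matrix_(i < 2, j < 2)
       if (i == 0 :> nat) then (if (j == 0 :> nat) then p else 1 - p)
       else (if (j == 0 :> nat) then p / 3 else 1 - p / 3)).

End QDefs.

From HB Require Import structures.
From mathcomp Require Import all_boot all_order all_algebra.
From mathcomp Require Import reals complex mxtens.
From mathcomp Require Import sesquilinear spectral.
From mathcomp Require Import lra.
Import Order.TTheory GRing.Theory Num.Theory.
Local Open Scope ring_scope.

(* The seven code states in C^3 (x) C^3 (receiver (x) environment) are
   |02>, |10>, |12>, |20>, |21>, (|00> - |11>)/sqrt 2 and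
   (|00> + |11> - 2|22>)/sqrt 6.  Each is orthogonal to |phi_3^+> and to |01>,
   hence equals V y_i for the input state y_i = V^dagger psi_i.  Measuring both
   factors in the computational basis identifies the first five states, while
   outcome (2,2) has probability 0 on the sixth and 2/3 on the seventh; guessing
   the sixth with probability p on outcomes (0,0) and (1,1) and the seventh
   otherwise produces M_7(p).
   Conversely, an encoding into Q_d satisfies
   Tr P = sum_j Tr(Lambda_j rho_j) <= sum_j Tr Lambda_j = d,
   whereas Tr M_7(p) = 6 + 2p/3 > 6 for p > 0. *)

Section Quantum.
Variable R : realType.
Local Notation C := R[i].
Local Open Scope sesquilinear_scope.

Lemma conjC_real (c : R) : (c%:C%C)^* = c%:C%C.
Proof. by apply: conj_Creal; apply/complex_realP; exists c. Qed.

Lemma adjE m n (A : 'M[C]_(m, n)) : adj A = A ^t*.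
Proof. by apply/matrixP => i j; rewrite !mxE. Qed.

Lemma adjM m n p (A : 'M[C]_(m, n)) (B : 'M[C]_(n, p)) :
  adj (A *m B) = adj B *m adj A.
Proof. by rewrite !adjE trmx_mul map_mxM. Qed.

Lemma adjK m n (A : 'M[C]_(m, n)) : adj (adj A) = A.
Proof. by rewrite !adjE trmxCK. Qed.

Lemma adjZ m n (c : C) (A : 'M[C]_(m, n)) : adj (c *: A) = c^* *: adj A.
Proof. by apply/matrixP => i j; rewrite !mxE rmorphM. Qed.

Lemma psd_outer n (c : R) (y : 'cV[C]_n) :
  0 <= c -> psd (c%:C%C *: (y *m adj y)).
Proof.
move=> c_ge0; split; first by rewrite adjZ conjC_real adjM adjK.
move=> v; rewrite -scalemxAr -scalemxAl mxE !mulmxA -[_ *m adj y *m v]mulmxA.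
have -> : adj y *m v = adj (adj v *m y) by rewrite adjM adjK.
rewrite mxE big_ord1 [adj _ _ _]mxE.
by rewrite mulr_ge0 ?ler0c ?mul_conjC_ge0.
Qed.

Lemma density_outer n (c : R) (y : 'cV[C]_n) :
  0 <= c -> c%:C%C * (adj y *m y) 0 0 = 1 -> density (c%:C%C *: (y *m adj y)).
Proof.
move=> c_ge0 unit_norm; split; first exact: psd_outer.
by rewrite mxtraceZ mxtrace_mulC /mxtrace big_ord1.
Qed.

Lemma povm_delta n : povm (fun l : 'I_n => (delta_mx l l : 'M[C]_n)).
Proof.
split; last by rewrite -mx1_sum_delta.
move=> l; rewrite -(scale1r (delta_mx l l)) -[1]/(1%:C%C).
rewrite -(mul_delta_mx (0 : 'I_1)).
have -> : (delta_mx 0 l : 'rV[C]_n) = adj (delta_mx l 0).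
  by apply/matrixP => i j; rewrite !mxE conjC_nat andbC.
exact: psd_outer.
Qed.

Lemma psd_conj_diag n (S M : 'M[C]_n) i : psd M -> 0 <= (S *m M *m S ^t*) i i.
Proof.
case=> _ /(_ ((row i S)^t* )); rewrite adjE trmxCK.
suff -> : (S *m M *m S^t* ) i i = (row i S *m M *m (row i S)^t* ) 0 0 by [].
by rewrite -row_mul !mxE; apply: eq_bigr => k _; rewrite !mxE.
Qed.

Lemma mxtrace_psd_density_le n (L rho : 'M[C]_n) :
  psd L -> density rho -> \tr (L *m rho) <= \tr L.
Proof.
move=> psdL [psd_rho tr_rho].
have rho_normal : rho \is normalmx.
  by apply/normalmxP; case: psd_rho; rewrite adjE => <-.
set S := spectralmx rho; set D := spectral_diag rho.
have S_unitary : S \is unitarymx by apply: spectral_unitarymx.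
have SSt : S *m S ^t* = 1%:M by apply/unitarymxP.
have StS : S ^t* *m S = 1%:M.
  by rewrite -invmx_unitary // mulVmx // unitarymx_unit.
have rhoE := orthomx_spectralP rho_normal.
rewrite -/S -/D invmx_unitary // in rhoE.
have diagD : S *m rho *m S ^t* = diag_mx D.
  by rewrite rhoE !mulmxA SSt mul1mx -!mulmxA SSt mulmx1.
have D_ge0 i : 0 <= D 0 i.
  by have := @psd_conj_diag _ S rho i psd_rho; rewrite diagD mxE eqxx mulr1n.
have D_sum : \sum_i D 0 i = 1.
  by rewrite -tr_rho -mxtrace_diag -diagD mxtrace_mulC mulmxA StS mul1mx.
have D_le1 i : D 0 i <= 1 by rewrite -D_sum (bigD1 i) //= lerDl sumr_ge0.
set K := S *m L *m S ^t*.
have K_ge0 i : 0 <= K i i by apply: psd_conj_diag.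
have -> : \tr L = \tr K by rewrite /K mxtrace_mulC mulmxA StS mul1mx.
have -> : \tr (L *m rho) = \sum_i K i i * D 0 i.
  rewrite rhoE !mulmxA mxtrace_mulC !mulmxA -/K /mxtrace.
  by apply: eq_bigr => i _; rewrite mul_mx_diag mxE.
rewrite /mxtrace; apply: ler_sum => i _.
by rewrite -subr_ge0 -{1}(mulr1 (K i i)) -mulrBr mulr_ge0 // subr_ge0.
Qed.

Lemma PQ_trace_le d n (P : 'M[R]_n) : PQ d P -> \tr P <= d%:R.
Proof.
case=> rho [L [rho_density [[psdL sumL] PE]]].
rewrite -(@lecR R) rmorph_nat.
have -> : d%:R = \sum_j \tr (L j) :> C.
  by rewrite -raddf_sum /= sumL mxtrace_scalar.
have -> : (\tr P)%:C%C = \sum_j (P j j)%:C%C by rewrite -rmorph_sum.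
apply: ler_sum => j _; rewrite [_%:C%C]PE.
exact: mxtrace_psd_density_le.
Qed.

Lemma mxtrace_delta_mul n (x : 'I_n) (M : 'M[C]_n) :
  \tr (delta_mx x x *m M) = M x x.
Proof.
rewrite -(mul_delta_mx (0 : 'I_1)) -mulmxA mxtrace_mulC -rowE -colE.
by rewrite /mxtrace big_ord1 !mxE.
Qed.

Lemma tens_delta_mx m n (i : 'I_m) (j : 'I_n) :
  (delta_mx i i : 'M[C]_m) *t (delta_mx j j : 'M[C]_n) =
  delta_mx (mxtens_index (i, j)) (mxtens_index (i, j)).
Proof.
apply/matrixP => x y.
case: (mxtens_indexP x) => a b; case: (mxtens_indexP y) => a' b'.
rewrite tensmxE !mxE !(inj_eq (can_inj (@mxtens_indexK m n))) !xpair_eqE.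
by case: (a == i); case: (a' == i); case: (b == j); case: (b' == j);
  rewrite /= ?mul1r ?mul0r.
Qed.

Lemma big_mxtens_index m n (F : 'I_(m * n) -> C) :
  \sum_x F x = \sum_(a < m) \sum_(b < n) F (mxtens_index (a, b)).
Proof.
rewrite pair_big /= (reindex (@mxtens_index m n)) /=.
  by apply: eq_bigr => -[].
by exists (@mxtens_unindex m n) => x _; rewrite (mxtens_indexK, mxtens_unindexK).
Qed.

Definition realvec {m n} (f : 'I_m -> 'I_n -> R) : 'cV[C]_(m * n) :=
  \col_x (f (mxtens_unindex x).1 (mxtens_unindex x).2)%:C%C.

Lemma realvecE m n (f : 'I_m -> 'I_n -> R) a b x :
  realvec f (mxtens_index (a, b)) x = (f a b)%:C%C.
Proof. by rewrite mxE mxtens_indexK. Qed.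

Lemma realvec_norm m n (f : 'I_m -> 'I_n -> R) :
  (adj (realvec f) *m realvec f) 0 0 = (\sum_a \sum_b f a b ^+ 2)%:C%C.
Proof.
rewrite mxE big_mxtens_index rmorph_sum; apply: eq_bigr => a _.
rewrite rmorph_sum; apply: eq_bigr => b _.
by rewrite !mxE mxtens_indexK conjC_real -rmorphM expr2.
Qed.

Lemma mxtrace_tens_delta_realvec m n (a : 'I_m) (b : 'I_n) (c : R) f :
  \tr ((delta_mx a a *t delta_mx b b) *m
       (c%:C%C *: (realvec f *m adj (realvec f)))) = (c * f a b ^+ 2)%:C%C.
Proof.
rewrite tens_delta_mx mxtrace_delta_mul !mxE big_ord1 !mxE mxtens_indexK.
by rewrite conjC_real expr2 !rmorphM.
Qed.

Lemma isometry_range_id dA N (V : 'M[C]_(N, dA)) (psi : 'cV[C]_N) :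
  adj V *m V = 1%:M -> (exists y, psi = V *m y) -> V *m (adj V *m psi) = psi.
Proof. by move=> isoV [y ->]; rewrite [adj V *m _]mulmxA isoV mul1mx. Qed.

Lemma isometry_pure_state dA N (V : 'M[C]_(N, dA)) (y : 'cV[C]_dA) (c : R) :
  adj V *m V = 1%:M -> 0 <= c -> c%:C%C * (adj (V *m y) *m (V *m y)) 0 0 = 1 ->
  density (c%:C%C *: (y *m adj y)) /\
  V *m (c%:C%C *: (y *m adj y)) *m adj V = c%:C%C *: ((V *m y) *m adj (V *m y)).
Proof.
move=> isoV c_ge0 Vy_norm; split.
  apply: density_outer; rewrite // -Vy_norm adjM -mulmxA.
  by rewrite [adj V *m _]mulmxA isoV mul1mx.
by rewrite -scalemxAr -scalemxAl adjM !mulmxA.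
Qed.

Lemma sum_eq_natr n (a : 'I_n) (g : 'I_n -> C) : \sum_b (b == a)%:R * g b = g a.
Proof.
rewrite (bigD1 a) //= eqxx mul1r big1 ?addr0 // => b /negbTE ->.
by rewrite mul0r.
Qed.

Lemma adj_mulmx_tens m n (u v : 'cV[C]_(m * n)) : (adj u *m v) 0 0 =
  \sum_a \sum_b (u (mxtens_index (a, b)) 0)^* * v (mxtens_index (a, b)) 0.
Proof.
by rewrite mxE big_mxtens_index; under eq_bigr do under eq_bigr do rewrite mxE.
Qed.

Lemma ket3E (k a : 'I_3) (x : 'I_1) : ket3 R k a x = (a == k)%:R.
Proof. by rewrite mxE ord1 eqxx andbT. Qed.

Lemma phi3E a b x : phi3 R (mxtens_index (a, b)) x = (sqrtC 3)^-1 * (a == b)%:R.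
Proof.
rewrite mxE summxE; congr (_ * _); case: (mxtens_indexP x) => u v.
under eq_bigr do rewrite tensmxE !ket3E [a == _]eq_sym.
by rewrite sum_eq_natr eq_sym.
Qed.

Lemma ket01E a b x :
  ket01 R (mxtens_index (a, b)) x = (a == 0)%:R * (b == 1)%:R.
Proof. by case: (mxtens_indexP x) => u v; rewrite tensmxE !ket3E. Qed.

Lemma realvec_perp (f : 'I_3 -> 'I_3 -> R) : \sum_a f a a = 0 -> f 0 1 = 0 ->
  adj (phi3 R) *m realvec f = 0 /\ adj (ket01 R) *m realvec f = 0.
Proof.
move=> f_traceless f01.
split; apply/matrixP => i j; rewrite !ord1 [RHS]mxE adj_mulmx_tens.
  under eq_bigr => a _ do under eq_bigr => b _ do
    rewrite phi3E realvecE rmorphM rmorph_nat -mulrA [a == _]eq_sym.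
  under eq_bigr do rewrite -mulr_sumr sum_eq_natr.
  by rewrite -mulr_sumr -rmorph_sum /= f_traceless mulr0.
under eq_bigr do under eq_bigr do
  rewrite ket01E realvecE rmorphM !rmorph_nat -mulrA.
under eq_bigr do rewrite -mulr_sumr sum_eq_natr.
by rewrite sum_eq_natr f01.
Qed.

(* Unnormalized amplitude of |l> (x) |k> in the i-th code state;
   [witness_scale i] is its inverse squared norm. *)
Definition witness_amp (i l k : nat) : R :=
  match i, l, k with
  | 0, 0, 2 => 1 | 1, 1, 0 => 1 | 2, 1, 2 => 1 | 3, 2, 0 => 1 | 4, 2, 1 => 1
  | 5, 0, 0 => 1 | 5, 1, 1 => -1
  | 6, 0, 0 => 1 | 6, 1, 1 => 1 | 6, 2, 2 => -2
  | _, _, _ => 0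
  end.

Definition witness_scale (i : nat) : R :=
  match i with 5 => 1 / 2 | 6 => 1 / 6 | _ => 1 end.

(* q(j | l, k); the outcome (0,1) never occurs. *)
Definition decoder (p : R) (l k j : nat) : R :=
  match l, k with
  | 0, 2 => (j == 0)%:R
  | 1, 0 => (j == 1)%:R
  | 1, 2 => (j == 2)%:R
  | 2, 0 => (j == 3)%:R
  | 2, 1 => (j == 4)%:R
  | 0, 0 | 1, 1 => if j == 5 then p else if j == 6 then 1 - p else 0
  | _, _ => (j == 6)%:R
  end.

Lemma witness_amp_traceless (i : 'I_7) : \sum_(a < 3) witness_amp i a a = 0.
Proof.
rewrite !big_ord_recr big_ord0 /=.
by case: i => [[|[|[|[|[|[|[|//]]]]]]] ?] /=; lra.
Qed.

Lemma witness_amp01 (i : 'I_7) : witness_amp i 0 1 = 0.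
Proof. by case: i => [[|[|[|[|[|[|[|//]]]]]]] ?]. Qed.

Lemma witness_normalized (i : 'I_7) :
  witness_scale i * \sum_(a < 3) \sum_(b < 3) witness_amp i a b ^+ 2 = 1.
Proof.
rewrite !big_ord_recr !big_ord0 /=.
by case: i => [[|[|[|[|[|[|[|//]]]]]]] ?] /=; lra.
Qed.

Lemma witness_scale_ge0 (i : 'I_7) : 0 <= witness_scale i.
Proof. by case: i => [[|[|[|[|[|[|[|//]]]]]]] ?] /=; lra. Qed.

Lemma decoder_ge0 (p : R) l k j : 0 <= p <= 1 -> 0 <= decoder p l k j.
Proof.
move=> /andP[p_ge0 p_le1].
case: l => [|[|[|l]]]; case: k => [|[|[|k]]] /=; rewrite ?ler0n //;
  by do 2 case: ifP => _ //; rewrite subr_ge0.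
Qed.

Lemma decoder_sum1 (p : R) (l k : 'I_3) : \sum_(j < 7) decoder p l k j = 1.
Proof.
rewrite !big_ord_recr big_ord0 /=.
by case: l => [[|[|[|//]]] ?]; case: k => [[|[|[|//]]] ?] /=; lra.
Qed.

Lemma M7E (p : R) (i j : 'I_7) : M7 p i j =
  if (i < 5)%N then (i == j :> nat)%:R else if (j < 5)%N then 0 else
  if i == 5 :> nat then (if j == 5 :> nat then p else 1 - p)
  else (if j == 5 :> nat then p / 3 else 1 - p / 3).
Proof.
rewrite /M7 /block_mx mxE; case: splitP => [i' ->|i' ->]; rewrite mxE;
  case: splitP => [j' ->|j' ->]; rewrite !mxE /=;
  case: i' => [[|[|[|[|[|]]]]] ?] //; case: j' => [[|[|[|[|[|]]]]] ?] //.
Qed.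

Lemma M7_decoded (p : R) (i j : 'I_7) : M7 p i j =
  \sum_(l < 3) \sum_(k < 3)
    decoder p l k j * (witness_scale i * witness_amp i l k ^+ 2).
Proof.
rewrite M7E !big_ord_recr !big_ord0 /=.
case: i => [[|[|[|[|[|[|[|//]]]]]]] ?];
  by case: j => [[|[|[|[|[|[|[|//]]]]]]] ?] /=; lra.
Qed.

Lemma M7_trace (p : R) : \tr (M7 p) = 6 + 2 / 3 * p.
Proof.
rewrite /mxtrace !big_ord_recr big_ord0 /= !M7E /=; lra.
Qed.

Lemma M7_in_Pmin (V : 'M[C]_(3 * 3, 7)) :
  is_isometry V -> range_is_perp V -> forall p, 0 <= p <= 1 -> Pmin V (M7 p).
Proof.
move=> isoV rangeV p p01.
pose psi (i : 'I_7) := realvec (fun a b : 'I_3 => witness_amp i a b).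
pose y (i : 'I_7) := adj V *m psi i.
have Vy i : V *m y i = psi i.
  apply: isometry_range_id isoV _; apply/rangeV/realvec_perp.
    exact: witness_amp_traceless.
  exact: witness_amp01.
pose rho (i : 'I_7) := (witness_scale i)%:C%C *: (y i *m adj (y i)).
have state i : density (rho i) /\
    V *m rho i *m adj V = (witness_scale i)%:C%C *: (psi i *m adj (psi i)).
  rewrite -Vy; apply: isometry_pure_state isoV (witness_scale_ge0 i) _.
  by rewrite Vy realvec_norm -rmorphM witness_normalized.
exists rho, 3, 3, (fun l => delta_mx l l), (fun k => delta_mx k k),
  (fun l k j => decoder p l k j).
split; first by move=> i; case: (state i).
do 2 (split; first exact: povm_delta).
split; first by move=> l k j; apply: decoder_ge0.
split; first exact: decoder_sum1.
move=> i j; rewrite (state i).2 M7_decoded /toC -/(real_complex R _).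
rewrite !rmorph_sum.
apply: eq_bigr => l _; rewrite rmorph_sum; apply: eq_bigr => k _.
by rewrite mxtrace_tens_delta_realvec rmorphM.
Qed.

Lemma M7_notin_PQ (p : R) : 0 < p <= 1 -> forall d, (d <= 6)%N -> ~ PQ d (M7 p).
Proof.
move=> /andP[p_gt0 _] d d_le6 /PQ_trace_le; rewrite M7_trace.
have : d%:R <= 6 :> R by rewrite ler_nat.
lra.
Qed.

End Quantum.

Theorem theorem1 (R : realType) (V : 'M[R[i]]_(3 * 3, 7)) :
  is_isometry V -> range_is_perp V ->
  (forall p : R, 0 <= p <= 1 -> Pmin V (M7 p)) /\
  (forall p : R, 0 < p <= 1 -> forall d : nat, (d <= 6)%N -> ~ PQ d (M7 p)) /\
  (forall d : nat, (d < 7)%N ->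
     ~ (forall P : 'M[R]_(7, 7), Pmin V P -> PQ d P)).
Proof.
move=> isoV rangeV; have M7_in_Pmin1 := @M7_in_Pmin R V isoV rangeV.
split; first exact: M7_in_Pmin1.
split; first exact: M7_notin_PQ.
move=> d d_lt7 Pmin_PQ.
apply: (@M7_notin_PQ R 1 _ d d_lt7); first by rewrite ltr01 lexx.
by apply/Pmin_PQ/M7_in_Pmin1; rewrite ler01 lexx.
Qed.
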